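(* Let $2\le k_1<\dots<k_m\le n$ ($m\ge1$), $1\le i_{k_j}\le k_j-1$, with $M:=\sum_{j=1}^m i_{k_j}\le k_1$. Let $\pi'=t_{k_1}^{i_{k_1}}\cdots t_{k_m}^{i_{k_m}}\in S_n$, $\pi^\circ$ the same word in $D_n$, and $\pi=w_L\cdot\pi^\circ$ with $1\le L\le n-1$. Then: (a) if $L<M$, $\ell(\pi)=2L+\ell(\pi')$; (b) if $L=M<k_1$, $\ell(\pi)=\ell(\pi')$; (c) if $M<L<k_1$, $\ell(\pi)=2(L-M)+\ell(\pi')$; (d) if $k_r\le L<k_{r+1}$ for some $1\le r\le m-1$, $\ell(\pi)=2\big(L-\sum_{j=r+1}^m i_{k_j}\big)+\ell(\pi')$; (e) if $L\ge k_m$, $\ell(\pi)=2L+\ell(\pi')$.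
   Context: $D_n$ ($n\ge2$) is the Coxeter group with generators $s_{1'},s_1,\dots,s_{n-1}$ and relations $s^2=1$, $(s_i s_{i+1})^3=1$, $(s_is_j)^2=1$ for $|i-j|\ge 2$, $(s_{1'}s_2)^3=1$, $(s_{1'}s_i)^2=1$ for $i\ne 2$; $S_n$ has Coxeter generators $s_i=(i,i+1)$. In both groups $t_k=s_1\cdots s_{k-1}$; in $D_n$, $w_L=s_L s_{L-1}\cdots s_2 s_1 s_{1'} s_2\cdots s_L$. $\ell(\pi)$ is Coxeter length in $D_n$ with respect to $\{s_{1'},s_1,\dots,s_{n-1}\}$, and $\ell(\pi')$ is Coxeter length in $S_n$. (The hypothesis $M\le k_1$ says $\pi'$ is a standard OGS elementary element with major index $M$.) *)

From mathcomp Require Import all_boot all_fingroup.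
Set Implicit Arguments. Unset Strict Implicit. Unset Printing Implicit Defensive.

Section WordLength.
Variables (G : finType) (gT : finGroupType) (gen : G -> gT).

Definition wordval (w : seq G) : gT := foldr (fun g acc => (gen g * acc)%g) 1%g w.

Definition haslen (x : gT) (k : nat) : bool :=
  [exists t : k.-tuple G, wordval t == x].

Lemma haslen_ex (w : seq G) : exists k, haslen (wordval w) k.
Proof. exists (size w); apply/existsP; exists (in_tuple w); by []. Qed.

Definition coxlen (w : seq G) : nat := ex_minn (haslen_ex w).
End WordLength.

(* S_n : generators s_1..s_{n-1}; j : 'I_n.-1 encodes s_{j+1} = (j+1, j+2)  *)
(* (i.e. swapping the 0-indexed points j and j+1 of 'I_n).                  *)
Definition genS (n : nat) := 'I_n.-1.

Definition sS (n : nat) (j : genS n) : {perm 'I_n} :=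
  match (insub (val j) : option 'I_n), (insub (val j).+1 : option 'I_n) with
  | Some a, Some b => tperm a b
  | _, _ => 1%g
  end.

(* D_n realised (faithfully, Bjorner-Brenti 8.2) as even signed permutations *)
(* of {1..n}, i.e. permutations of 'I_n * bool (bool = sign).                *)
(* None encodes s_{1'} = [-2,-1,3,...,n]; Some j encodes s_{j+1}.            *)
Definition genD (n : nat) := option 'I_n.-1.

Definition sD (n : nat) (g : genD n) : {perm 'I_n * bool} :=
  match g with
  | None =>
    match (insub 0 : option 'I_n), (insub 1 : option 'I_n) with
    | Some a, Some b => (tperm (a, false) (b, true) * tperm (a, true) (b, false))%g
    | _, _ => 1%g
    end
  | Some j =>
    match (insub (val j) : option 'I_n), (insub (val j).+1 : option 'I_n) with
    | Some a, Some b => (tperm (a, false) (b, false) * tperm (a, true) (b, true))%g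
    | _, _ => 1%g
    end
  end.

(* i : nat stands for s_i (1 <= i <= n-1); in D_n, None stands for s_{1'}.  *)
Definition letS (n : nat) (i : nat) : option (genS n) :=
  if 0 < i then insub i.-1 else None.

Definition letD (n : nat) (o : option nat) : option (genD n) :=
  match o with
  | None => Some None
  | Some i => omap Some (letS n i)
  end.

Definition lenS (n : nat) (w : seq nat) : nat := coxlen (@sS n) (pmap (letS n) w).
Definition lenD (n : nat) (w : seq (option nat)) : nat :=
  coxlen (@sD n) (pmap (letD n) w).

Definition t_word (k : nat) : seq nat := iota 1 k.-1.

Definition t_pow (k i : nat) : seq nat := flatten (nseq i (t_word k)).

Definition ogs_word (m : nat) (k i : nat -> nat) : seq nat :=
  flatten [seq t_pow (k j) (i j) | j <- iota 1 m].

(* w_L = s_L s_{L-1} ... s_2 s_1 s_{1'} s_2 ... s_L *)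
Definition wL_word (L : nat) : seq (option nat) :=
  [seq Some x | x <- rev (iota 1 L)] ++ None :: [seq Some x | x <- iota 2 L.-1].

From mathcomp Require Import all_boot all_fingroup ssralg ssrnum ssrint zify.
Set Implicit Arguments. Unset Strict Implicit. Unset Printing Implicit Defensive.
Import GRing.Theory Num.Theory.

(* Both lengths are inversion statistics: the length of a permutation is its number of
   inversions, and the length of an even signed permutation w counts the pairs i < j with
   w(i) > w(j) plus those with w(i) + w(j) < 0.  Each statistic equals the Coxeter length
   because it vanishes only at 1, grows by at most one under a generator, and some
   generator always lowers it.
   The window of pi is that of pi' with the entries at positions 1 and L + 1 negated, so
   the D-statistic exceeds the S-statistic by 2 #{a <= L : pi'(a) < pi'(L + 1)}.  Following
   how each block t_k^i rotates positions gives pi' explicitly, and this count is L when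
   L < M, and L - M + i_{k_1} + ... + i_{k_r} when M <= L and exactly r of the k_j are at
   most L, which yields the five cases. *)

Section LengthCharacterization.
Variables (G : finType) (gT : finGroupType) (gen : G -> gT).
Variables (dom : pred gT) (f : gT -> nat).
Hypotheses (genK : forall g, (gen g * gen g = 1)%g) (f1 : f 1%g = 0) (dom1 : dom 1%g)
  (domM : forall g y, dom y -> dom (gen g * y)%g)
  (f_genM : forall g y, dom y -> f (gen g * y)%g <= (f y).+1)
  (f_descent : forall y, dom y -> y != 1%g -> exists g, f (gen g * y)%g < f y).

Lemma dom_wordval w : dom (wordval gen w).
Proof. by elim: w => [|g w IH] //=; apply: domM. Qed.

Lemma f_wordval_le w : f (wordval gen w) <= size w.
Proof.
elim: w => [|g w IH] /=; first by rewrite f1.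
exact: leq_trans (f_genM g (dom_wordval w)) _.
Qed.

Lemma short_word y : dom y -> exists2 w, wordval gen w = y & size w <= f y.
Proof.
have [N] := ubnP (f y); elim: N y => // N IH y fyN y_dom.
have [->|y_ne1] := eqVneq y 1%g; first by exists [::].
have [g fgy] := f_descent y_dom y_ne1.
have [w wE wsize] := IH _ (leq_trans fgy fyN) (domM g y_dom).
by exists (g :: w); rewrite /= ?wE ?mulgA ?genK ?mul1g //; apply: leq_ltn_trans fgy.
Qed.

Lemma coxlenE w : coxlen gen w = f (wordval gen w).
Proof.
rewrite /coxlen; case: ex_minnP => l /existsP [t /eqP tE] l_min.
apply/eqP; rewrite eqn_leq; apply/andP; split; last first.
  by rewrite -tE; apply: leq_trans (f_wordval_le _) _; rewrite size_tuple.
have [w' w'E w'size] := short_word (dom_wordval w).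
apply: leq_trans (l_min _ _) w'size.
by apply/existsP; exists (in_tuple w'); rewrite /= w'E.
Qed.
End LengthCharacterization.

Definition pairstat n T (c : T -> T -> nat) (x : 'I_n -> T) : nat :=
  \sum_(p : 'I_n * 'I_n | p.1 < p.2) c (x p.1) (x p.2).

Lemma val_tperm n (a b x : 'I_n) :
  (tperm a b x : nat) =
  if x == a :> nat then (b : nat) else if x == b :> nat then (a : nat) else x.
Proof. by rewrite permE /= !val_eqE; case: (x =P a); case: (x =P b). Qed.

Lemma pairstat_swap n T (c : T -> T -> nat) (x x' : 'I_n -> T) (a b : 'I_n) :
  b = a.+1 :> nat ->
  (forall p : 'I_n * 'I_n, p.1 < p.2 -> p != (a, b) ->
     c (x' p.1) (x' p.2) = c (x (tperm a b p.1)) (x (tperm a b p.2))) ->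
  pairstat c x' + c (x a) (x b) = pairstat c x + c (x' a) (x' b).
Proof.
move=> ab x'E; have lt_ab : a < b by rewrite ab.
rewrite /pairstat (bigD1 (a, b)) //= [in RHS](bigD1 (a, b)) //= addnAC [RHS]addnAC.
congr (_ + _); first exact: addnC.
rewrite (eq_bigr (fun p => c (x (tperm a b p.1)) (x (tperm a b p.2)))); last first.
  by move=> p /andP [? ?]; rewrite x'E.
pose h (p : 'I_n * 'I_n) := (tperm a b p.1, tperm a b p.2).
have h_inj : injective h by move=> [? ?] [? ?] [/perm_inj -> /perm_inj ->].
rewrite [RHS](reindex_inj h_inj); apply: eq_bigl => -[p1 p2] /=.
have eq_val (u v : 'I_n) : (u == v) = (u == v :> nat) by [].
rewrite /h /= !xpair_eqE !eq_val !val_tperm ab.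
move: (nat_of_ord p1) (nat_of_ord p2) (nat_of_ord a) => u v w.
by repeat case: ifP; move=> *; apply/idP/idP; lia.
Qed.

Lemma ord_succ_increasing_id n (f : 'I_n -> nat) :
  (forall a b : 'I_n, b = a.+1 :> nat -> f a < f b) -> (forall a, f a < n) ->
  forall a, f a = a.
Proof.
move=> f_inc f_lt.
have f_ge t (a : 'I_n) : a = t :> nat -> t <= f a.
  elim: t a => // t IH a aE; have t_lt : t < n by have := ltn_ord a; lia.
  by have := IH (Ordinal t_lt) erefl; have := f_inc (Ordinal t_lt) a aE; lia.
have f_le d (a : 'I_n) : a + d < n -> f a + d < n.
  elim: d a => [|d IH] a ad; first by rewrite addn0.
  have a1_lt : a.+1 < n by lia.
  have := IH (Ordinal a1_lt) ltac:(rewrite /=; lia).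
  by have := f_inc a (Ordinal a1_lt) erefl; lia.
move=> a; have := f_ge _ a erefl; have := f_le (n - a.+1) a; have := ltn_ord a; lia.
Qed.

Lemma adjacent_of_index n (j : 'I_n.-1) : exists a b : 'I_n, a = j :> nat /\ b = j.+1 :> nat.
Proof.
have a_lt : j < n by have := ltn_ord j; lia.
have b_lt : j.+1 < n by have := ltn_ord j; lia.
by exists (Ordinal a_lt), (Ordinal b_lt).
Qed.

Lemma index_of_adjacent n (a b : 'I_n) : b = a.+1 :> nat -> exists j : 'I_n.-1, j = a :> nat.
Proof.
move=> ab; have j_lt : a < n.-1 by have := ltn_ord b; lia.
by exists (Ordinal j_lt).
Qed.

Lemma sS_tperm n (j : 'I_n.-1) (a b : 'I_n) :
  a = j :> nat -> b = j.+1 :> nat -> sS j = tperm a b.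
Proof. by move=> aj bj; rewrite /sS -[val j]/(nat_of_ord j) -bj -aj !valK. Qed.

Definition invS n (y : {perm 'I_n}) : nat :=
  pairstat (fun u v => (v < u : nat)) (fun a => nat_of_ord (y a)).

Lemma invS_swap n (y : {perm 'I_n}) (a b : 'I_n) : b = a.+1 :> nat ->
  invS (tperm a b * y) + (y b < y a) = invS y + (y a < y b).
Proof.
move=> ab; have := pairstat_swap (c := fun u v => (v < u : nat)) (x := fun a => nat_of_ord (y a))
  (x' := fun c => nat_of_ord ((tperm a b * y)%g c)) ab.
by rewrite !permM tpermL tpermR; apply=> p _ _; rewrite !permM.
Qed.

Lemma perm_adjacent_descent n (y : {perm 'I_n}) : y != 1%g ->
  exists a b : 'I_n, b = a.+1 :> nat /\ y b < y a.
Proof.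
move=> y_ne1.
have [/existsP[a /existsP[b /andP[/eqP ab yba]]]|no_desc] :=
  boolP [exists a : 'I_n, exists b : 'I_n, (b == a.+1 :> nat) && (y b < y a)].
  by exists a, b.
case/negP: y_ne1; apply/eqP/permP => a; rewrite perm1; apply: val_inj.
apply: (ord_succ_increasing_id (f := fun a => nat_of_ord (y a))) => // a' b' ab.
have y_ne : (y a' : nat) != y b'.
  by apply/eqP => /ord_inj/perm_inj a'b'; move: ab; rewrite a'b'; lia.
move: no_desc; rewrite negb_exists => /forallP/(_ a'); rewrite negb_exists => /forallP/(_ b').
by rewrite ab eqxx /=; lia.
Qed.

Lemma coxlen_sS n (w : seq 'I_n.-1) : coxlen (@sS n) w = invS (wordval (@sS n) w).
Proof.
apply: (coxlenE (dom := predT)) => // [j||j y _|y _ /perm_adjacent_descent [a [b [ab yba]]]].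
- by have [a [b [aj bj]]] := adjacent_of_index j; rewrite (sS_tperm aj bj) tperm2.
- by rewrite /invS /pairstat big1 // => p lt_p; rewrite !perm1 ltnNge ltnW.
- have [a [b [aj bj]]] := adjacent_of_index j.
  rewrite (sS_tperm aj bj) -(leq_add2r (y b < y a)) invS_swap ?aj //.
  by have := leq_b1 (y a < y b); lia.
- have [j ja] := index_of_adjacent ab; exists j.
  rewrite (sS_tperm (esym ja) (etrans ab (congr1 S (esym ja)))).
  rewrite -(ltn_add2r (y b < y a)) invS_swap //.
  have yab : (y a < y b) = false by rewrite ltnNge ltnW.
  by rewrite yba yab addn0 addn1.
Qed.

Definition flip n (q : 'I_n * bool) : 'I_n * bool := (q.1, ~~ q.2).

(* (a, false) is the point a + 1 of {-n, ..., -1, 1, ..., n}, and (a, true) is -(a + 1). *)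
Definition signed n (q : 'I_n * bool) : int := if q.2 then (- Posz q.1.+1)%R else Posz q.1.+1.

(* The contribution of two window entries u, v at positions i < j to the length of an
   even signed permutation (Bjorner-Brenti, Section 8.2). *)
Definition invD_pair (u v : int) : nat := (v < u)%R + (v < - u)%R.

Lemma invD_pairNl u v : invD_pair (- u) v = invD_pair u v.
Proof. by rewrite /invD_pair opprK addnC. Qed.

Lemma invD_pair_swap u v : u != v -> u != (- v)%R ->
  invD_pair v u + (v < u)%R = invD_pair u v + (u < v)%R.
Proof.
rewrite /invD_pair; case: (ltrgtP u v); case: (ltrgtP u (- v)); case: (ltrgtP v (- u));
  move=> /= *; lia.
Qed.

Lemma invD_pair_swapN u v : u != v -> u != (- v)%R ->
  invD_pair (- v) (- u) + (v < - u)%R = invD_pair u v + (- u < v)%R.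
Proof.
move=> ne ne'; rewrite invD_pairNl invD_pair_swap ?invD_pairNl // eqr_oppLR ?opprK.
- exact: ne'.
- exact: ne.
Qed.

Lemma signed_flip n (q : 'I_n * bool) : signed (flip q) = (- signed q)%R.
Proof. by case: q => a []; rewrite /signed /= ?opprK. Qed.

Lemma signed_inj n : injective (@signed n).
Proof.
move=> [a s] [b t]; rewrite /signed /=; case: s; case: t => /= E; try lia.
all: by congr pair; apply: ord_inj; lia.
Qed.

Lemma signed_gt0 n (q : 'I_n * bool) : (0 < signed q)%R = ~~ q.2.
Proof. by case: q => a []; rewrite /signed /=; lia. Qed.

Lemma sD_tperm n (j : 'I_n.-1) (a b : 'I_n) : a = j :> nat -> b = j.+1 :> nat ->
  forall q, sD (Some j) q = (tperm a b q.1, q.2).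
Proof.
move=> aj bj [c s]; rewrite /sD -[val j]/(nat_of_ord j) -bj -aj !valK permM.
have ab : (a == b) = false by apply/negbTE; rewrite -val_eqE /= aj bj; lia.
rewrite !permE /= !xpair_eqE /=.
by case: s; (case: (c =P a) => [->|/eqP/negbTE ca]; [|case: (c =P b) => [->|/eqP/negbTE cb]]);
  do 2!rewrite /= ?xpair_eqE ?eqxx ?ab ?(eq_sym b) ?ab ?ca ?cb.
Qed.

Lemma sD_none n (a b : 'I_n) : a = 0 :> nat -> b = 1 :> nat ->
  forall q, sD None q = if q.1 == a then (b, ~~ q.2) else if q.1 == b then (a, ~~ q.2) else q.
Proof.
move=> a0 b1 [c s]; rewrite /sD -[1]b1 -[0]a0 !valK permM.
have ab : (a == b) = false by apply/negbTE; rewrite -val_eqE /= a0 b1.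
rewrite !permE /= !xpair_eqE /=.
by case: s; (case: (c =P a) => [->|/eqP/negbTE ca]; [|case: (c =P b) => [->|/eqP/negbTE cb]]);
  do 2!rewrite /= ?xpair_eqE ?eqxx ?ab ?(eq_sym b) ?ab ?ca ?cb.
Qed.

Definition even_signed n (y : {perm 'I_n * bool}) : bool :=
  [forall q, y (flip q) == flip (y q)] && ~~ odd (\sum_(a : 'I_n) (y (a, false)).2).

Definition window n (y : {perm 'I_n * bool}) (a : 'I_n) : int := signed (y (a, false)).

Definition invD n (y : {perm 'I_n * bool}) : nat := pairstat invD_pair (window y).

Lemma even_signed1 n : even_signed (1 : {perm 'I_n * bool}).
Proof.
apply/andP; split; first by apply/forallP => q; rewrite !perm1.
by rewrite big1 // => a _; rewrite perm1.
Qed.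

Lemma invD1 n : invD (1 : {perm 'I_n * bool}) = 0.
Proof.
rewrite /invD /pairstat big1 // => -[a b] /= ab; rewrite /window !perm1 /invD_pair /signed /=.
lia.
Qed.

Section SignedPermutations.
Variables (n : nat) (a0 b0 : 'I_n).
Hypotheses (a0E : a0 = 0 :> nat) (b0E : b0 = 1 :> nat).

Lemma a0_neq_b0 : (a0 == b0) = false.
Proof. by apply/negbTE; rewrite -val_eqE /= a0E b0E. Qed.

Lemma sD_flip (g : option 'I_n.-1) (q : 'I_n * bool) : sD g (flip q) = flip (sD g q).
Proof.
case: g => [j|].
  by have [a [b [aj bj]]] := adjacent_of_index j; rewrite !(sD_tperm aj bj).
by rewrite !(sD_none a0E b0E) /flip /=; case: ifP => //; case: ifP.
Qed.

Lemma even_signed_flip (y : {perm 'I_n * bool}) :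
  even_signed y -> forall q, y (flip q) = flip (y q).
Proof. by case/andP => /forallP y_flip _ q; apply/eqP. Qed.

Lemma window_neq (y : {perm 'I_n * bool}) (a b : 'I_n) : even_signed y -> a != b ->
  window y a != window y b /\ window y a != (- window y b)%R.
Proof.
move=> ey ab; split; apply/eqP.
  by move/signed_inj/perm_inj => [] /eqP; rewrite (negbTE ab).
rewrite /window -signed_flip -even_signed_flip //.
by move/signed_inj/perm_inj => [] /eqP; rewrite (negbTE ab).
Qed.

Lemma even_signedM (g : option 'I_n.-1) (y : {perm 'I_n * bool}) :
  even_signed y -> even_signed (sD g * y).
Proof.
move=> ey; apply/andP; split.
  by apply/forallP => q; rewrite !permM sD_flip even_signed_flip.
case: g => [j|].
  have [a [b [aj bj]]] := adjacent_of_index j.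
  under eq_bigr => c _ do rewrite permM (sD_tperm aj bj) /=.
  rewrite [X in odd X](reindex_inj (@perm_inj _ (tperm a b))) /=.
  by under eq_bigr => c _ do rewrite tpermK; case/andP: ey.
under eq_bigr => c _ do rewrite permM (sD_none a0E b0E) /=.
have b0_neq_a0 : b0 != a0 by rewrite eq_sym a0_neq_b0.
case/andP: (ey) => _; rewrite (bigD1 a0) // (bigD1 b0) //= [X in _ -> ~~ odd X](bigD1 a0) //.
rewrite [X in _ -> ~~ odd (_ + X)](bigD1 b0) //= eqxx (negbTE b0_neq_a0) eqxx.
under [X in _ -> ~~ odd (_ + (_ + X))]eq_bigr => c /andP [ca cb]
  do rewrite (negbTE ca) (negbTE cb).
rewrite -[(a0, true)]/(flip (a0, false)) -[(b0, true)]/(flip (b0, false)) !even_signed_flip //=.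
by rewrite !oddD; case: (y (a0, false)).2; case: (y (b0, false)).2 => /=; case: odd.
Qed.

Lemma sDK (g : option 'I_n.-1) : (sD g * sD g = 1)%g.
Proof.
apply/permP => -[c s]; rewrite permM perm1.
case: g => [j|].
  by have [a [b [aj bj]]] := adjacent_of_index j; rewrite !(sD_tperm aj bj) /= tpermK.
rewrite !(sD_none a0E b0E) /=.
case: (c =P a0) => [->|/eqP/negbTE ca]; first by rewrite eqxx /= eq_sym a0_neq_b0 negbK.
case: (c =P b0) => [->|/eqP/negbTE cb]; first by rewrite eqxx /= negbK.
by rewrite /= ca cb.
Qed.

Lemma invD_some (j : 'I_n.-1) (a b : 'I_n) (y : {perm 'I_n * bool}) :
  a = j :> nat -> b = j.+1 :> nat -> even_signed y ->
  invD (sD (Some j) * y) + (window y b < window y a)%R = invD y + (window y a < window y b)%R.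
Proof.
move=> aj bj ey; have ab : b = a.+1 :> nat by rewrite aj bj.
have a_neq_b : a != b by rewrite -val_eqE /= ab; lia.
have [ne ne'] := window_neq ey a_neq_b.
have := invD_pair_swap ne ne'.
have winE c : window (sD (Some j) * y) c = window y (tperm a b c).
  by rewrite /window permM (sD_tperm aj bj).
have := pairstat_swap ab (fun p _ _ => congr2 invD_pair (winE p.1) (winE p.2)).
by rewrite !winE tpermL tpermR /invD; lia.
Qed.

Lemma invD_none (y : {perm 'I_n * bool}) : even_signed y ->
  invD (sD None * y) + (window y b0 < - window y a0)%R =
  invD y + (- window y a0 < window y b0)%R.
Proof.
move=> ey; have ab : b0 = a0.+1 :> nat by rewrite a0E b0E.
have [ne ne'] := window_neq ey (negbT a0_neq_b0).
have winE c : window (sD None * y) c =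
    if c == a0 then (- window y b0)%R else if c == b0 then (- window y a0)%R else window y c.
  rewrite /window permM (sD_none a0E b0E) /=.
  by case: ifP => _; [|case: ifP => _]; rewrite // -signed_flip -even_signed_flip.
have pairE (p : 'I_n * 'I_n) : p.1 < p.2 -> p != (a0, b0) ->
    invD_pair (window (sD None * y) p.1) (window (sD None * y) p.2) =
    invD_pair (window y (tperm a0 b0 p.1)) (window y (tperm a0 b0 p.2)).
  case: p => [c d] /= cd ne_ab.
  have d_a0 : (d == a0) = false by apply/negbTE; rewrite -val_eqE /= a0E; lia.
  have d_b0 : (d == b0) = false.
    apply/negbTE/eqP => db; move: ne_ab cd.
    by rewrite db xpair_eqE eqxx andbT -val_eqE /= a0E b0E; lia.
  rewrite !winE d_a0 d_b0 [tperm a0 b0 d]tpermD 1?eq_sym ?d_a0 ?d_b0 //.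
  case: (c =P a0) => [->|/eqP ca]; first by rewrite eqxx tpermL invD_pairNl.
  case: (c =P b0) => [->|/eqP cb]; first by rewrite a0_neq_b0 tpermR invD_pairNl.
  by rewrite eq_sym (negbTE ca) tpermD // eq_sym.
have swapN : invD_pair (- window y b0) (- window y a0) + (window y b0 < - window y a0)%R =
    invD_pair (window y a0) (window y b0) + (- window y a0 < window y b0)%R.
  exact: invD_pair_swapN.
have := pairstat_swap ab pairE.
by rewrite !winE eqxx eq_sym a0_neq_b0 eqxx /invD; lia.
Qed.

Section IncreasingWindow.
Variable y : {perm 'I_n * bool}.
Hypotheses (ey : even_signed y)
  (window_inc : forall a b : 'I_n, b = a.+1 :> nat -> (window y a < window y b)%R)
  (window01 : (- window y a0 < window y b0)%R).

Lemma window_gt0 (a : 'I_n) : a != a0 -> (0 < window y a)%R.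
Proof.
have pos t (c : 'I_n) : c = t.+1 :> nat -> (0 < window y c)%R.
  elim: t c => [|t IH] c cE.
    have -> : c = b0 by apply: ord_inj; rewrite cE b0E.
    by have := window_inc (etrans b0E (congr1 S (esym a0E))); lia.
  have t1_lt : t.+1 < n by have := ltn_ord c; lia.
  by have := IH (Ordinal t1_lt) erefl; have := window_inc (a := Ordinal t1_lt) cE; lia.
rewrite -val_eqE /= a0E; case aE: (nat_of_ord a) => [|t] // _; exact: pos aE.
Qed.

Lemma window_sign (a : 'I_n) : (y (a, false)).2 = false.
Proof.
have sign_ne0 (c : 'I_n) : c != a0 -> (y (c, false)).2 = false.
  by move/window_gt0; rewrite /window signed_gt0 => /negbTE.
have [->|/sign_ne0 //] := eqVneq a a0.
case/andP: ey => _; rewrite (bigD1 a0) //= big1 => [|c /sign_ne0 -> //].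
by rewrite addn0; case: (y (a0, false)).2.
Qed.

Lemma even_signed_id : y = 1%g.
Proof.
have fix_pos (a : 'I_n) : y (a, false) = (a, false).
  have fst_id : forall c : 'I_n, (y (c, false)).1 = c :> nat.
    apply: (ord_succ_increasing_id (f := fun c => nat_of_ord (y (c, false)).1)) => // c d cd.
    by have := window_inc cd; rewrite /window /signed !window_sign ltz_nat.
  by move: (fst_id a) (window_sign a); case: (y (a, false)) => c s /= /ord_inj -> ->.
apply/permP => -[a []]; rewrite perm1 ?fix_pos //.
by rewrite -[(a, true)]/(flip (a, false)) even_signed_flip // fix_pos.
Qed.
End IncreasingWindow.

Lemma invD_step (g : option 'I_n.-1) (y : {perm 'I_n * bool}) :
  even_signed y -> invD (sD g * y) <= (invD y).+1.
Proof.
move=> ey; case: g => [j|].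
  have [a [b [aj bj]]] := adjacent_of_index j.
  rewrite -(leq_add2r (window y b < window y a)%R) invD_some //.
  by have := leq_b1 (window y a < window y b)%R; lia.
rewrite -(leq_add2r (window y b0 < - window y a0)%R) invD_none //.
by have := leq_b1 (- window y a0 < window y b0)%R; lia.
Qed.

Lemma invD_descent (y : {perm 'I_n * bool}) :
  even_signed y -> y != 1%g -> exists g, invD (sD g * y) < invD y.
Proof.
move=> ey y_ne1.
have [/existsP [g desc]|] := boolP [exists g, invD (sD g * y) < invD y]; first by exists g.
rewrite negb_exists => /forallP no_desc; case/eqP: y_ne1.
have asc g : invD y <= invD (sD g * y) by rewrite leqNgt no_desc.
apply: even_signed_id => // [a b ab|].
  have [j ja] := index_of_adjacent ab.
  have := asc (Some j); rewrite -(leq_add2r (window y b < window y a)%R).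
  rewrite invD_some ?(esym ja) ?(etrans ab (congr1 S (esym ja))) //.
  have a_neq_b : a != b by rewrite -val_eqE /= ab; lia.
  have [ne _] := window_neq ey a_neq_b.
  by case: ltrgtP ne => //=; lia.
have := asc None; rewrite -(leq_add2r (window y b0 < - window y a0)%R) invD_none //.
have [_ ne] := window_neq ey (negbT a0_neq_b0).
have ne' : (- window y a0 != window y b0)%R by rewrite eqr_oppLR.
by case: ltrgtP ne' => //=; lia.
Qed.
End SignedPermutations.

Lemma coxlen_sD n (w : seq (option 'I_n.-1)) : 1 < n ->
  coxlen (@sD n) w = invD (wordval (@sD n) w).
Proof.
move=> n_gt1; pose a0 : 'I_n := Ordinal (ltnW n_gt1); pose b0 : 'I_n := Ordinal n_gt1.
have a0E : a0 = 0 :> nat by []; have b0E : b0 = 1 :> nat by [].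
apply: (coxlenE (dom := @even_signed n)).
- exact: sDK a0E b0E.
- exact: invD1.
- exact: even_signed1.
- exact: even_signedM a0E b0E.
- exact: invD_step a0E b0E.
- exact: invD_descent a0E b0E.
Qed.

Definition act_s (t x : nat) : nat := if t == x.-1 then x else if t == x then x.-1 else t.

Definition act_sD (q : nat * bool) (o : option nat) : nat * bool :=
  match o with
  | Some x => (act_s q.1 x, q.2)
  | None => if q.1 == 0 then (1, ~~ q.2) else if q.1 == 1 then (0, ~~ q.2) else q
  end.

(* t_k^i rotates the positions 0, ..., k - 1 down by i (mod k) and fixes the others. *)
Definition act_tpow (k i t : nat) : nat :=
  if t < k then (if i <= t then t - i else t + k - i) else t.

Fixpoint act_ogs (k i : nat -> nat) (j t : nat) : nat :=
  if j is j'.+1 then act_tpow (k j) (i j) (act_ogs k i j' t) else t.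

Lemma foldl_t_word k t : foldl act_s t (t_word k) = act_tpow k 1 t.
Proof.
rewrite /t_word; case: k => [|k] /=; first by rewrite /act_tpow.
elim: k t => [|k IH] t; first by rewrite /act_tpow /=; case: t.
rewrite -[k.+1]addn1 iotaD foldl_cat IH add1n /= /act_s /act_tpow.
by repeat case: ifP; move=> *; lia.
Qed.

Lemma foldl_t_pow k i t : i < k -> foldl act_s t (t_pow k i) = act_tpow k i t.
Proof.
elim: i t => [|i IH] t ik; first by rewrite /act_tpow subn0; case: ifP.
rewrite /t_pow /= foldl_cat -/(t_pow k i) IH 1?foldl_t_word /act_tpow; last by lia.
by repeat case: ifP; move=> *; lia.
Qed.

Lemma foldl_ogs_word (k i : nat -> nat) j t : (forall l, 1 <= l <= j -> i l < k l) ->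
  foldl act_s t (ogs_word j k i) = act_ogs k i j t.
Proof.
elim: j t => [|j IH] t ik //=.
rewrite /ogs_word -[j.+1]addn1 iotaD map_cat flatten_cat foldl_cat add1n /= cats0 addn1.
rewrite -/(ogs_word j k i) IH => [|l lj]; last by apply: ik; lia.
by rewrite foldl_t_pow //; apply: ik; lia.
Qed.

Lemma foldl_map_Some u q : foldl act_sD q (map Some u) = (foldl act_s q.1 u, q.2).
Proof. by elim: u q => [|x u IH] [a s] //=; rewrite IH. Qed.

Lemma foldl_wL_word L a s : 1 <= L ->
  foldl act_sD (a, s) (wL_word L) = (a, s (+) ((a == 0) || (a == L))).
Proof.
elim: L a s => [//|[|L] IH] a s _.
  by rewrite /wL_word /= /act_s /=; case: a => [|[|a]] //=; rewrite ?addbT ?addbF.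
have -> : wL_word L.+2 = Some L.+2 :: wL_word L.+1 ++ [:: Some L.+2].
  rewrite /wL_word.
  have -> : iota 1 L.+2 = iota 1 L.+1 ++ [:: L.+2] by rewrite -[in LHS](addn1 L.+1) iotaD add1n.
  have -> : iota 2 L.+1 = iota 2 L ++ [:: L.+2] by rewrite -[in LHS](addn1 L) iotaD.
  by rewrite rev_cat /= map_cat -catA.
rewrite /= foldl_cat /= IH // /act_s /=.
have e21 : (L.+2 == L.+1) = false by apply/eqP; lia.
have e12 : (L.+1 == L.+2) = false by apply/eqP; lia.
by case: (a =P L.+1) => [->|/eqP/negbTE na]; [|case: (a =P L.+2) => [->|/eqP/negbTE nb]];
  rewrite /= ?eqxx ?na ?nb ?e21 ?e12 /= ?addbT ?addbF ?negbK.
Qed.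

Definition nlower (f : nat -> nat) (L : nat) : nat := \sum_(0 <= a < L) (f a < f L : nat).

Lemma sum_nat_true lo hi (b : nat -> bool) : (forall a, lo <= a < hi -> b a) ->
  \sum_(lo <= a < hi) (b a : nat) = hi - lo.
Proof.
move=> bT; rewrite (eq_big_nat _ _ (F2 := fun => 1)) => [|a /bT -> //].
by rewrite sum_nat_const_nat muln1.
Qed.

Lemma sum_nat_false lo hi (b : nat -> bool) : (forall a, lo <= a < hi -> ~~ b a) ->
  \sum_(lo <= a < hi) (b a : nat) = 0.
Proof.
by move=> bF; rewrite big1_seq // => a /andP [_]; rewrite mem_index_iota => /bF/negbTE ->.
Qed.

Definition psum (i : nat -> nat) j := \sum_(1 <= l < j.+1) i l.

Lemma psum0 i : psum i 0 = 0.
Proof. by rewrite /psum big_geq. Qed.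

Lemma psumS i j : psum i j.+1 = psum i j + i j.+1.
Proof. by rewrite /psum big_nat_recr. Qed.

Lemma psum_mono i j j' : j <= j' -> psum i j <= psum i j'.
Proof. by move=> jj'; rewrite /psum [X in _ <= X](big_cat_nat _ (n := j.+1)) //= leq_addr. Qed.

Lemma psum_block i t j : t < psum i j -> exists2 l, 1 <= l <= j & psum i l.-1 <= t < psum i l.
Proof.
elim: j => [|j IH]; first by rewrite psum0.
have [/IH [l lj tl] _|tj tj1] := ltnP t (psum i j); first by exists l => //; lia.
by exists j.+1; rewrite //= tj.
Qed.

Lemma k_block (k : nat -> nat) t j :
  exists c, [/\ c <= j, 1 <= c -> k c <= t & c < j -> t < k c.+1].
Proof.
elim: j => [|j [c [cj kc kc1]]]; first by exists 0.
have [cj' | /(conj cj) /andP /anti_leq cE] := ltnP c j.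
  by exists c; split => //; [exact: ltnW | move=> _; exact: kc1].
subst c; have [tk | kt] := ltnP t (k j.+1); first by exists j; split.
by exists j.+1; split => //; rewrite ltnn.
Qed.

Lemma increasing_mono m (k : nat -> nat) : (forall j, 1 <= j < m -> k j < k j.+1) ->
  forall a b, 1 <= a -> a <= b -> b <= m -> k a <= k b.
Proof.
move=> k_inc a b a_ge1; elim: b => [|b IH]; first lia.
rewrite leq_eqVlt => /orP [/eqP -> //|]; rewrite ltnS => ab b_lt.
by have := IH ab (ltnW b_lt); have := k_inc b ltac:(lia); lia.
Qed.

Section OGSBlocks.
Variables (m : nat) (k i : nat -> nat).
Hypotheses (k1_ge2 : 2 <= k 1) (k_inc : forall j, 1 <= j < m -> k j < k j.+1)
  (i_bound : forall j, 1 <= j <= m -> 1 <= i j <= (k j).-1) (psum_le_k1 : psum i m <= k 1).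

Local Notation psum := (psum i).
Local Notation k_mono := (increasing_mono k_inc).

Lemma act_ogs_high j c t : j <= m -> c <= j -> psum j <= t ->
  (1 <= c -> k c <= t) -> (c < j -> t < k c.+1) -> act_ogs k i j t = t - psum j + psum c.
Proof.
elim: j c => [|j IH] c jm cj tj kc_le kc1_gt /=.
  by move: cj; rewrite leqn0 => /eqP ->; rewrite psum0 subn0 addn0.
have := i_bound (j := j.+1) ltac:(lia); have := psumS i j => Sj ij.
have tj' : psum j <= t by lia.
have [cj1 | jc] := ltnP c j.+1.
  have kc1 := kc1_gt cj1.
  have := k_mono (a := c.+1) (b := j.+1) ltac:(lia) cj1 jm.
  have := @psum_mono i c j cj1.
  rewrite (IH c (ltnW jm) cj1 tj' kc_le (fun _ => kc1)) /act_tpow.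
  by repeat case: ifP; move=> *; lia.
have cE : c = j.+1 by apply/eqP; rewrite eqn_leq cj.
subst c; have kj1 := kc_le isT.
have kj : 1 <= j -> k j <= t by move=> j_ge1; have := k_inc (j := j) ltac:(lia); lia.
rewrite (IH j (ltnW jm) (leqnn j) tj' kj) ?ltnn // /act_tpow.
by repeat case: ifP; move=> *; lia.
Qed.

Lemma act_ogs_low j l t : j <= m -> 1 <= l <= j -> psum l.-1 <= t < psum l ->
  act_ogs k i j t = t + k l - psum j.
Proof.
elim: j => [|j IH] jm lj tl /=; first lia.
have := i_bound (j := j.+1) ltac:(lia); have := psumS i j => Sj ij.
have := psum_mono i jm; have := k_mono (a := 1) (b := l) (leqnn 1) ltac:(lia) ltac:(lia).
move=> k1l pm; have [lj1 | jl] := ltnP l j.+1.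
  have := k_mono (a := l) (b := j) ltac:(lia) lj1 (ltnW jm).
  have := k_inc (j := j) ltac:(lia); have := @psum_mono i l j lj1.
  rewrite (IH (ltnW jm) ltac:(lia) tl) /act_tpow.
  by repeat case: ifP; move=> *; lia.
have lE : l = j.+1 by lia.
subst l; have tj : psum j <= t by case/andP: tl.
rewrite (act_ogs_high (ltnW jm) (leq0n j) tj) // => [|_]; last lia.
by rewrite psum0 /act_tpow; repeat case: ifP; move=> *; lia.
Qed.

Local Notation G := (act_ogs k i m).
Local Notation M := (psum m).

Lemma k_ge_M l : 1 <= l <= m -> M <= k l.
Proof. by move=> lm; have := k_mono (a := 1) (b := l) (leqnn 1) ltac:(lia) ltac:(lia); lia. Qed.

Lemma act_ogs_below a :
  a < M -> exists2 l, 1 <= l <= m & (psum l.-1 <= a < psum l) /\ G a = a + k l - M.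
Proof. by move=> aM; have [l lm al] := psum_block aM; exists l; rewrite ?(act_ogs_low _ lm). Qed.

Lemma psum_block_mono l l' a a' : a < a' ->
  psum l.-1 <= a < psum l -> psum l'.-1 <= a' < psum l' -> l <= l'.
Proof.
move=> aa' al al'; rewrite leqNgt; apply/negP => l'l.
by have := @psum_mono i l' l.-1 ltac:(lia); lia.
Qed.

Lemma nlower_low L : L < M -> nlower G L = L.
Proof.
move=> LM; rewrite /nlower sum_nat_true ?subn0 // => a /andP [_ aL].
have [l lm [lL ->]] := act_ogs_below LM.
have [l' l'm [al' ->]] := act_ogs_below (ltn_trans aL LM).
have := k_mono (a := l') (b := l) ltac:(lia) (psum_block_mono aL al' lL) ltac:(lia).
by have := k_ge_M l'm; lia.
Qed.

Lemma nlower_high c L :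
  c <= m -> M <= L -> (1 <= c -> k c <= L) -> (c < m -> L < k c.+1) ->
  nlower G L = L - M + psum c.
Proof.
move=> cm ML kcL Lkc1; have GL := act_ogs_high (leqnn m) cm ML kcL Lkc1.
have cM := psum_mono i cm.
have -> : nlower G L = \sum_(0 <= a < psum c) (G a < G L : nat) +
    \sum_(psum c <= a < M) (G a < G L : nat) + \sum_(M <= a < L) (G a < G L : nat).
  by rewrite /nlower -!big_cat_nat //=; lia.
have low : \sum_(0 <= a < psum c) (G a < G L : nat) = psum c.
  rewrite sum_nat_true ?subn0 // => a /andP [_ ac].
  have [l lm [al ->]] := act_ogs_below (leq_trans ac cM).
  have lc : l <= c.
    by rewrite leqNgt; apply/negP => cl; have := @psum_mono i c l.-1 ltac:(lia); lia.
  have := k_mono (a := l) (b := c) ltac:(lia) lc cm.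
  by have := kcL ltac:(lia); have := k_ge_M lm; lia.
have mid : \sum_(psum c <= a < M) (G a < G L : nat) = 0.
  apply: sum_nat_false => a /andP [ca aM]; have [l lm [al ->]] := act_ogs_below aM.
  have cl : c < l by rewrite ltnNge; apply/negP => lc; have := psum_mono i lc; lia.
  have := k_mono (a := c.+1) (b := l) ltac:(lia) cl ltac:(lia).
  by have := Lkc1 ltac:(lia); lia.
have high : \sum_(M <= a < L) (G a < G L : nat) = L - M.
  apply: sum_nat_true => a /andP [Ma aL]; have [c' [c'm kc'a kc'1a]] := k_block k a m.
  have c'c : c' <= c.
    rewrite leqNgt; apply/negP => cc'.
    have := k_mono (a := c.+1) (b := c') ltac:(lia) cc' c'm.
    by have := kc'a ltac:(lia); have := Lkc1 ltac:(lia); lia.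
  by rewrite GL (act_ogs_high (leqnn m) c'm Ma kc'a kc'1a); have := psum_mono i c'c; lia.
by rewrite low mid high; lia.
Qed.
End OGSBlocks.

Lemma invD_pair_pos (u v : nat) : invD_pair (Posz u.+1) (Posz v.+1) = (v < u).
Proof.
rewrite /invD_pair; case: (ltrP (Posz v.+1) (Posz u.+1));
  case: (ltrP (Posz v.+1) (- Posz u.+1)); case: ltnP => /= *; lia.
Qed.

Lemma invD_pair_posneg (u v : nat) : invD_pair (Posz u.+1) (- Posz v.+1) = (u < v).+1.
Proof.
rewrite /invD_pair; case: (ltrP (- Posz v.+1) (Posz u.+1));
  case: (ltrP (- Posz v.+1) (- Posz u.+1)); case: ltnP => /= *; lia.
Qed.

Lemma sum_pairs_at n L (F : nat -> nat -> nat) : L < n ->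
  \sum_(p : 'I_n * 'I_n | p.1 < p.2) (if p.2 == L :> nat then F p.1 p.2 else 0) =
  \sum_(0 <= a < L) F a L.
Proof.
move=> Ln; rewrite -(pair_big_dep xpredT (fun a b : 'I_n => a < b)
  (fun a b : 'I_n => if b == L :> nat then F a b else 0)) /=.
rewrite (eq_bigr (fun a : 'I_n => if a < L then F a L else 0)) => [|a _]; last first.
  rewrite -big_mkcondr; case: ltnP => aL.
    rewrite (big_pred1 (Ordinal Ln)) // => b /=.
    by rewrite -val_eqE /=; case: eqP => [->|_]; rewrite ?andbT ?andbF.
  by rewrite big_pred0 // => b; case: eqP => [bL|]; rewrite ?andbF // bL ltnNge aL.
by rewrite -big_mkcond big_mkord (big_ord_widen n (fun a => F a L) (ltnW Ln)).
Qed.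

Lemma invD_negate_0_L n (X : {perm 'I_n * bool}) (P : {perm 'I_n}) (G : nat -> nat) L :
  L < n -> (forall a : 'I_n, P a = G a :> nat) ->
  (forall a : 'I_n, X (a, false) = (P a, (a == 0 :> nat) || (a == L :> nat))) ->
  invD X = invS P + 2 * nlower G L.
Proof.
move=> Ln PG XE.
have term (p : 'I_n * 'I_n) : p.1 < p.2 -> invD_pair (window X p.1) (window X p.2) =
    (P p.2 < P p.1) + 2 * (if p.2 == L :> nat then (G p.1 < G p.2 : nat) else 0).
  case: p => a b /= ab; rewrite /window !XE /signed /= -!PG.
  have Pab : P a != P b :> nat.
    by apply/eqP => /ord_inj/perm_inj abE; move: ab; rewrite abE ltnn.
  have -> : (b == 0 :> nat) = false by apply/negbTE; rewrite -lt0n (leq_ltn_trans _ ab).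
  case: (_ || _); case: (b == L :> nat);
    rewrite /= ?invD_pairNl ?invD_pair_pos ?invD_pair_posneg;
    move: Pab; case: ltngtP => //= *; lia.
rewrite /invD /pairstat (eq_bigr _ term) big_split /= -big_distrr /=.
by rewrite (sum_pairs_at (fun a b => (G a < G b : nat))).
Qed.

Lemma letS_some n x :
  0 < x < n -> exists2 j : 'I_n.-1, letS n x = Some j & j = x.-1 :> nat.
Proof.
move=> x_ok; have j_lt : x.-1 < n.-1 by lia.
by exists (Ordinal j_lt) => //; rewrite /letS ifT ?insubT //; case/andP: x_ok.
Qed.

Lemma wordval_sS_foldl n (w : seq nat) : all (fun x => 0 < x < n) w ->
  forall a : 'I_n, wordval (@sS n) (pmap (letS n) w) a = foldl act_s a w :> nat.
Proof.
elim: w => [|x w IH] /=; first by move=> _ a; rewrite perm1.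
case/andP => x_ok w_ok a; have [j -> jx] := letS_some x_ok.
rewrite /= permM IH //; congr foldl.
have [c [d [cj dj]]] := adjacent_of_index j.
by rewrite (sS_tperm cj dj) val_tperm cj dj jx /act_s prednK //; case/andP: x_ok.
Qed.

Definition nat_point n (q : 'I_n * bool) : nat * bool := (nat_of_ord q.1, q.2).

Lemma wordval_sD_foldl n (w : seq (option nat)) :
  1 < n -> all (oapp (fun x => 0 < x < n) true) w ->
  forall q, nat_point (wordval (@sD n) (pmap (letD n) w) q) = foldl act_sD (nat_point q) w.
Proof.
move=> n_gt1; elim: w => [|[x|] w IH] /=; first by move=> _ q; rewrite perm1.
  case/andP => x_ok w_ok q; have [j -> jx] := letS_some x_ok.
  rewrite /= permM IH //; congr foldl.
  have [c [d [cj dj]]] := adjacent_of_index j.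
  rewrite (sD_tperm cj dj) /nat_point /= val_tperm cj dj jx /act_s prednK //.
  by case/andP: x_ok.
move=> w_ok q; rewrite /= permM IH //; congr foldl.
pose a0 : 'I_n := Ordinal (ltnW n_gt1); pose b0 : 'I_n := Ordinal n_gt1.
rewrite (sD_none (a := a0) (b := b0)) // /nat_point /=.
case: q => c s /=; have -> : (c == a0) = (c == 0 :> nat) by [].
by have -> : (c == b0) = (c == 1 :> nat) by []; case: ifP => //; case: ifP.
Qed.

Section WLOGSWord.
Variables (n m : nat) (k i : nat -> nat) (L : nat).
Hypotheses (n_ge2 : 2 <= n) (m_ge1 : 1 <= m) (k1_ge2 : 2 <= k 1)
  (k_inc : forall j, 1 <= j < m -> k j < k j.+1) (km_le_n : k m <= n)
  (i_bound : forall j, 1 <= j <= m -> 1 <= i j <= (k j).-1)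
  (M_le_k1 : psum i m <= k 1) (L_range : 1 <= L <= n.-1).

Let i_lt_k l : 1 <= l <= m -> i l < k l.
Proof.
by move=> lm; have := i_bound lm; have := increasing_mono k_inc (a := 1) (b := l); lia.
Qed.

Lemma ogs_word_letters : all (fun x => 0 < x < n) (ogs_word m k i).
Proof.
apply/allP => x /flatten_mapP [j]; rewrite mem_iota => jm.
move/flattenP => [w]; rewrite mem_nseq => /andP [_ /eqP ->]; rewrite /t_word mem_iota => xk.
by have := increasing_mono k_inc (a := j) (b := m); lia.
Qed.

Lemma wL_ogs_letters :
  all (oapp (fun x => 0 < x < n) true) (wL_word L ++ map Some (ogs_word m k i)).
Proof.
rewrite all_cat /wL_word all_cat /= !all_map -andbA; apply/and3P; split.
- by apply/allP => x; rewrite mem_rev mem_iota /=; lia.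
- by apply/allP => x; rewrite mem_iota /=; lia.
- exact: ogs_word_letters.
Qed.

Lemma lenD_wL_ogs :
  lenD n (wL_word L ++ map Some (ogs_word m k i)) =
  lenS n (ogs_word m k i) + 2 * nlower (act_ogs k i m) L.
Proof.
pose P := wordval (@sS n) (pmap (letS n) (ogs_word m k i)).
have PE (a : 'I_n) : P a = act_ogs k i m a :> nat.
  by rewrite wordval_sS_foldl ?ogs_word_letters // (foldl_ogs_word _ i_lt_k).
rewrite /lenS /lenD coxlen_sS coxlen_sD //; apply: invD_negate_0_L PE _ => [|a]; first lia.
have := wordval_sD_foldl n_ge2 wL_ogs_letters (a, false).
rewrite /nat_point foldl_cat foldl_wL_word ?foldl_map_Some /=; last by case/andP: L_range.
move: (wordval _ _) => X; case: (X (a, false)) => b s /= [bE ->]; congr pair.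
by apply: ord_inj; rewrite bE wordval_sS_foldl ?ogs_word_letters.
Qed.
End WLOGSWord.

Theorem mainTheorem14 (n m : nat) (k i : nat -> nat) (L : nat) :
  2 <= n -> 1 <= m ->
  2 <= k 1 ->
  (forall j, 1 <= j < m -> k j < k j.+1) ->
  k m <= n ->
  (forall j, 1 <= j <= m -> 1 <= i j <= (k j).-1) ->
  \sum_(1 <= j < m.+1) i j <= k 1 ->
  1 <= L <= n.-1 ->
  let M := \sum_(1 <= j < m.+1) i j in
  let pi' := ogs_word m k i in
  let pi := wL_word L ++ [seq Some x | x <- pi'] in
  [/\ L < M -> lenD n pi = 2 * L + lenS n pi',
      L = M -> M < k 1 -> lenD n pi = lenS n pi',
      M < L -> L < k 1 -> lenD n pi = 2 * (L - M) + lenS n pi',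
      (forall r, 1 <= r <= m.-1 -> k r <= L < k r.+1 ->
         lenD n pi = 2 * (L - \sum_(r.+1 <= j < m.+1) i j) + lenS n pi')
    & k m <= L -> lenD n pi = 2 * L + lenS n pi'].
Proof.
move=> n_ge2 m_ge1 k1_ge2 k_inc km_le_n i_bound M_le_k1 L_range; cbv zeta.
rewrite -/(psum i m) lenD_wL_ogs //.
have nlow := nlower_low k1_ge2 k_inc i_bound M_le_k1.
have nhigh := nlower_high k1_ge2 k_inc i_bound M_le_k1.
have M_le_k l : 1 <= l <= m -> psum i m <= k l by exact: k_ge_M.
split => [LM | LM Mk1 | ML Lk1 | r r_range /andP [krL Lkr1] | kmL].
- by rewrite nlow; lia.
- by rewrite (nhigh 0) ?psum0; lia.
- by rewrite (nhigh 0) ?psum0; lia.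
- have Msplit : psum i m = psum i r + \sum_(r.+1 <= j < m.+1) i j.
    by rewrite /psum -big_cat_nat //; lia.
  by have Mkr := M_le_k r ltac:(lia); rewrite (nhigh r); lia.
- by have Mkm := M_le_k m ltac:(lia); rewrite (nhigh m); lia.
Qed.
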